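(* In the setup of the context, for all $x,y,z\in B$: (a) $\gamma_{x,y,z}$ and $n_x$ do not depend on the choice of the balanced representations $\rho_\lambda$; more precisely, $\sum_\lambda f_\lambda^{-1}v^{3a_\lambda}\chi_\lambda(xyz)$ and $\sum_\lambda f_\lambda^{-1}v^{a_\lambda}\chi_\lambda(x^\ast)$ lie in $\mathcal{O}$ and $\gamma_{x,y,z}\equiv\sum_{\lambda\in\Lambda}f_\lambda^{-1}v^{3a_\lambda}\chi_\lambda(xyz)\pmod{\mathfrak m}$, $\ n_x\equiv\sum_{\lambda\in\Lambda}f_\lambda^{-1}v^{a_\lambda}\chi_\lambda(x^\ast)\pmod{\mathfrak m}$; (b) $\gamma_{x,y,z}=\gamma_{y,z,x}$; (c) $\sum_{z\in B}\gamma_{x^\ast,y,z}\,n_z=\delta_{xy}$; (d) $\gamma_{x,y,z}=\gamma_{y^\ast,x^\ast,z^\ast}$; (e) $n_x=n_{x^\ast}$.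
   Context: Setup: $\Gamma$ totally ordered abelian group; $K$ field with surjective valuation $\nu:K\to\Gamma\cup\{\infty\}$, valuation ring $\mathcal{O}$, maximal ideal $\mathfrak m$, residue field $F=\mathcal{O}/\mathfrak m$ which is formally real. $H$ a finite-dimensional split semisimple symmetric $K$-algebra with trace form $\tau$, $\ast$ a $K$-linear involutive antiautomorphism, $B$ a $\ast$-symmetric basis ($B^\ast=B$, $\tau(bc^\ast)=\delta_{bc}$). Simple modules indexed by $\Lambda$, characters $\chi_\lambda$, Schur elements $c_\lambda$ ($\tau=\sum c_\lambda^{-1}\chi_\lambda$), $a_\lambda:=-\tfrac12\nu(c_\lambda)$, which lies in $\Gamma$. Fix a partial section: a group homomorphism $\Gamma_0:=\langle a_\lambda\mid\lambda\in\Lambda\rangle\to K^\times$, $\gamma\mapsto v^\gamma$, with $\nu(v^\gamma)=\gamma$; put $f_\lambda:=v^{2a_\lambda}c_\lambda\in\mathcal{O}^\times$ (viewed in $F$ via reduction when appropriate). An irreducible matrix representation $\rho:H\to K^{d\times d}$ of type $\lambda$ is balanced if $\nu(\rho(b))\ge-a_\lambda$ for all $b$ in every $\ast$-symmetric basis. For each $\lambda$ choose a balanced $\rho_\lambda:H\to K^{d_\lambda\times d_\lambda}$ of type $\lambda$ and put $c^\lambda(x):=v^{a_\lambda}\rho_\lambda(x)\bmod\mathfrak m\in F^{d_\lambda\times d_\lambda}$. Define $\gamma_{x,y,z}:=\sum_\lambda\sum_{\mathfrak s,\mathfrak t,\mathfrak u}f_\lambda^{-1}c^\lambda(x)_{\mathfrak{st}}c^\lambda(y)_{\mathfrak{tu}}c^\lambda(z)_{\mathfrak{us}}\in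 F$ and $n_x:=\sum_\lambda\sum_{\mathfrak s}f_\lambda^{-1}c^\lambda(x^\ast)_{\mathfrak{ss}}\in F$. *)

From HB Require Import structures.
From mathcomp Require Import all_boot all_order all_algebra all_field.

Set Implicit Arguments.
Unset Strict Implicit.
Unset Printing Implicit Defensive.

Import Order.TTheory GRing.Theory Num.Theory.
Local Open Scope ring_scope.

Definition ordered_group (G : porderZmodType) : Prop :=
  (forall x y : G, (x <= y) || (y <= x)) /\
  (forall x y z : G, x <= y -> x + z <= y + z).

(* Gamma u {oo} is modelled by option Gamma, with None = oo. *)
Definition vle (G : porderZmodType) (x y : option G) : bool :=
  match y with
  | None => true
  | Some b => match x with None => false | Some a => a <= b end
  end.

Definition vadd (G : porderZmodType) (x y : option G) : option G :=
  match x, y with Some a, Some b => Some (a + b) | _, _ => None end.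

Definition vmin (G : porderZmodType) (x y : option G) : option G :=
  if vle x y then x else y.

Definition is_valuation (G : porderZmodType) (K : fieldType)
  (nu : K -> option G) : Prop :=
  [/\ forall x, nu x = None <-> x = 0,
      forall x y, nu (x * y) = vadd (nu x) (nu y),
      forall x y, vle (vmin (nu x) (nu y)) (nu (x + y)) &
      forall g, exists x, nu x = g].

Definition inO (G : porderZmodType) (K : fieldType) (nu : K -> option G)
  (x : K) : bool := vle (Some 0) (nu x).

Definition inm (G : porderZmodType) (K : fieldType) (nu : K -> option G)
  (x : K) : bool :=
  match nu x with None => true | Some g => 0 < g end.

(* red : K -> F restricted to O is the residue map O -> O/m = F, i.e. a
   surjective ring morphism O -> F with kernel m (values outside O are
   irrelevant). *)
Definition is_residue_map (G : porderZmodType) (K F : fieldType)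
  (nu : K -> option G) (red : K -> F) : Prop :=
  [/\ red 1 = 1,
      forall x y, inO nu x -> inO nu y -> red (x + y) = red x + red y,
      forall x y, inO nu x -> inO nu y -> red (x * y) = red x * red y,
      forall x, inO nu x -> (red x == 0) = inm nu x &
      forall f, exists x, inO nu x /\ red x = f].

Definition formally_real (F : fieldType) : Prop :=
  forall s : seq F, \sum_(t <- s) t ^+ 2 != - 1.

Section Algebra.
Variables (K : fieldType) (H : falgType K).

Definition is_invol_antiaut (star : H -> H) : Prop :=
  [/\ forall (k : K) x y, star (k *: x + y) = k *: star x + star y,
      forall x y, star (x * y) = star y * star x &
      forall x, star (star x) = x].

Definition is_trace_form (tau : H -> K) : Prop :=
  [/\ forall (k : K) x y, tau (k *: x + y) = k * tau x + tau y,
      forall x y, tau (x * y) = tau (y * x) &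
      forall x, (forall y, tau (x * y) = 0) -> x = 0].

Definition star_sym_basis (tau : H -> K) (star : H -> H) (B : seq H) : Prop :=
  [/\ basis_of fullv B,
      {in B, forall b, star b \in B} &
      {in B &, forall b c, tau (b * star c) = (b == c)%:R}].

Definition is_rep (n : nat) (rho : H -> 'M[K]_n) : Prop :=
  [/\ forall (k : K) x y, rho (k *: x + y) = k *: rho x + rho y,
      rho 1 = 1%:M &
      forall x y, rho (x * y) = rho x *m rho y].

(* H is split semisimple with simple modules indexed by L, realised by the
   irreducible representations rho0 l (Wedderburn: x |-> (rho0 l x)_l is an
   isomorphism H ~ prod_l K^{d_l x d_l}). *)
Definition split_semisimple (L : finType) (d : L -> nat)
  (rho0 : forall l, H -> 'M[K]_(d l)) : Prop :=
  [/\ forall l, (0 < d l)%N,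
      forall l, is_rep (rho0 l),
      forall x y, (forall l, rho0 l x = rho0 l y) -> x = y &
      forall M : (forall l, 'M[K]_(d l)), exists x, forall l, rho0 l x = M l].

Definition chi (L : finType) (d : L -> nat)
  (rho0 : forall l, H -> 'M[K]_(d l)) (l : L) (x : H) : K :=
  \tr (rho0 l x).

Definition of_type (n : nat) (rho rho0 : H -> 'M[K]_n) : Prop :=
  is_rep rho /\
  exists P : 'M[K]_n, P \in unitmx /\ forall x, rho x = invmx P *m rho0 x *m P.

Definition balanced (G : porderZmodType) (nu : K -> option G)
  (tau : H -> K) (star : H -> H) (al : G) (n : nat) (rho : H -> 'M[K]_n)
  : Prop :=
  forall B', star_sym_basis tau star B' ->
  forall b, b \in B' -> forall i j, vle (Some (- al)) (nu (rho b i j)).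

End Algebra.

Definition in_Gamma0 (G : porderZmodType) (L : finType) (a : L -> G)
  (g : G) : Prop :=
  exists k : L -> int, g = \sum_l a l *~ k l.

Definition partial_section (G : porderZmodType) (K : fieldType)
  (nu : K -> option G) (L : finType) (a : L -> G) (v : G -> K) : Prop :=
  (forall g h, in_Gamma0 a g -> in_Gamma0 a h -> v (g + h) = v g * v h) /\
  (forall g, in_Gamma0 a g -> v g != 0 /\ nu (v g) = Some g).

Section Structure.
Variables (G : porderZmodType) (K F : fieldType) (red : K -> F)
  (H : falgType K) (star : H -> H) (L : finType) (d : L -> nat)
  (c : L -> K) (a : L -> G) (v : G -> K)
  (rho : forall l, H -> 'M[K]_(d l)).

Definition fl (l : L) : K := v (a l *+ 2) * c l.

Definition cmat (l : L) (x : H) : 'M[F]_(d l) :=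
  map_mx red (v (a l) *: rho l x).

Definition gammaF (x y z : H) : F :=
  \sum_l \sum_(s < d l) \sum_(t < d l) \sum_(u < d l)
    (red (fl l))^-1 * cmat l x s t * cmat l y t u * cmat l z u s.

Definition nF (x : H) : F :=
  \sum_l \sum_(s < d l) (red (fl l))^-1 * cmat l (star x) s s.

End Structure.

Definition S3 (G : porderZmodType) (K : fieldType) (H : falgType K)
  (L : finType) (d : L -> nat) (rho0 : forall l, H -> 'M[K]_(d l))
  (c : L -> K) (a : L -> G) (v : G -> K) (x y z : H) : K :=
  \sum_l (fl c a v l)^-1 * v (a l *+ 3) * chi rho0 l (x * y * z).

Definition S1 (G : porderZmodType) (K : fieldType) (H : falgType K)
  (star : H -> H)
  (L : finType) (d : L -> nat) (rho0 : forall l, H -> 'M[K]_(d l))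
  (c : L -> K) (a : L -> G) (v : G -> K) (x : H) : K :=
  \sum_l (fl c a v l)^-1 * v (a l) * chi rho0 l (star x).

From HB Require Import structures.
From mathcomp Require Import all_boot all_order all_algebra all_field.

Set Implicit Arguments.
Unset Strict Implicit.
Unset Printing Implicit Defensive.

Import Order.TTheory GRing.Theory Num.Theory.
Local Open Scope ring_scope.

(* Balancedness makes [v^{a_l} rho_l(b)] integral for [b] in [B], so [gamma]
   and [n] are the reductions mod [m] of trace formulas over [K]: this gives
   (a), and (b) is the cyclicity of the trace.  Reducing the Schur
   orthogonality relations [sum_b rho_l(b)_ij rho_l'(b^* )_km = delta c_l']
   gives [sum_z n_z c^l(z) = 1], whence (c).  The Casimir element
   [Omega_l = sum_b rho_l(b^* )^T rho_l(b^* )] intertwines [rho_l(x)] with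
   [rho_l(x^* )^T]; its reduction is a Gram matrix, invertible because [F] is
   formally real, so [c^l(x^* )] is conjugate to [c^l(x)^T] and the traces
   defining [gamma] and [n] transform as in (d) and (e). *)

Lemma formally_real_sqr_sum_eq0 (F : fieldType) (I : eqType) (r : seq I)
    (f : I -> F) :
  formally_real F -> \sum_(i <- r) f i ^+ 2 = 0 -> {in r, forall i, f i = 0}.
Proof.
move=> FR sum0 i ir; apply/eqP/negP => fi_neq0.
have rest : \sum_(j <- rem i r) f j ^+ 2 = - f i ^+ 2.
  apply/eqP; rewrite -addr_eq0 addrC; apply/eqP.
  by move: sum0; rewrite (perm_big _ (perm_to_rem ir)) big_cons.
have := FR [seq f j / f i | j <- rem i r].
rewrite big_map; under eq_bigr do rewrite expr_div_n.
have fi2_neq0 : f i ^+ 2 != 0 by rewrite expf_neq0 //; apply/negP.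
by rewrite -mulr_suml rest mulNr mulfV // eqxx.
Qed.

Lemma mxtrace_mxOver (R : pzSemiRingType) (S : addrClosed R) n (A : 'M[R]_n) :
  A \is a mxOver S -> \tr A \in S.
Proof. by move=> /mxOverP AS; apply: rpred_sum => i _; apply: AS. Qed.

Lemma mxOver_trmx (T : Type) (S : {pred T}) m n (A : 'M[T]_(m, n)) :
  A \is a mxOver S -> A^T \is a mxOver S.
Proof. by move=> /mxOverP AS; apply/mxOverP => i j; rewrite mxE. Qed.

Lemma mxtrace_conj (R : comUnitRingType) n (P A : 'M[R]_n) :
  P \in unitmx -> \tr (P *m A *m invmx P) = \tr A.
Proof. by move=> Pu; rewrite mxtrace_mulC mulmxA mulVmx // mul1mx. Qed.

Lemma conjmxM (R : comUnitRingType) n (P A C : 'M[R]_n) : P \in unitmx ->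
  (P *m A *m invmx P) *m (P *m C *m invmx P) = P *m (A *m C) *m invmx P.
Proof. by move=> Pu; rewrite !mulmxA mulmxKV. Qed.

Section SymmetricAlgebra.
Variables (K : fieldType) (H : falgType K) (tau : H -> K) (star : H -> H)
  (B : seq H) (L : finType) (d : L -> nat)
  (rho0 rho : forall l, H -> 'M[K]_(d l)) (c : L -> K).
Hypotheses (TF : is_trace_form tau) (ST : is_invol_antiaut star)
  (SB : star_sym_basis tau star B) (SS : split_semisimple rho0)
  (c_neq0 : forall l, c l != 0)
  (tau_chi : forall x, tau x = \sum_l (c l)^-1 * chi rho0 l x)
  (rho_type : forall l, of_type (rho l) (rho0 l)).

Fact tau_is_scalar : scalar tau.
Proof. by case: TF => lin _ _ k x y; rewrite lin. Qed.
HB.instance Definition _ := GRing.isLinear.Build K H K *%R tau tau_is_scalar.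

Fact star_is_linear : linear star.
Proof. by case: ST => lin _ _ k x y; rewrite lin. Qed.
HB.instance Definition _ := GRing.isLinear.Build K H H *:%R star star_is_linear.

Fact rho_is_linear l : linear (rho l).
Proof. by case: (rho_type l) => -[lin _ _] _ k x y; rewrite lin. Qed.
HB.instance Definition _ l :=
  GRing.isLinear.Build K H 'M[K]_(d l) *:%R (rho l) (rho_is_linear l).

Lemma tauC x y : tau (x * y) = tau (y * x).
Proof. by case: TF. Qed.

Lemma starM x y : star (x * y) = star y * star x.
Proof. by case: ST. Qed.

Lemma starK : involutive star.
Proof. by case: ST. Qed.

Lemma rhoM l x y : rho l (x * y) = rho l x *m rho l y.
Proof. by case: (rho_type l) => -[]. Qed.

Lemma uniq_basis : uniq B.
Proof. by case: SB => /andP[_ /free_uniq]. Qed.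

Lemma star_basis b : b \in B -> star b \in B.
Proof. by case: SB => _ + _; apply. Qed.

Lemma tau_dual : {in B &, forall b b', tau (b * star b') = (b == b')%:R}.
Proof. by case: SB. Qed.

Lemma big_basis_star (R : nmodType) (f : H -> R) :
  \sum_(b <- B) f (star b) = \sum_(b <- B) f b.
Proof.
rewrite -(big_map star xpredT f); apply/perm_big/uniq_perm.
- by rewrite map_inj_uniq ?uniq_basis //; apply: can_inj starK.
- exact: uniq_basis.
move=> x; apply/mapP/idP => [[b bB ->]|xB]; first exact: star_basis.
by exists (star x); rewrite ?starK ?star_basis.
Qed.

(* The dual basis of B with respect to tau is star @ B. *)
Lemma dual_basis_expansion h : h = \sum_(b <- B) tau (h * star b) *: b.
Proof.
apply/eqP; rewrite -subr_eq0; apply/eqP; set r := h - _.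
case: SB => /andP[/eqP spanB _] _ _.
case: TF => _ _ nondeg; apply: nondeg => y.
have r_orth b' : b' \in B -> tau (r * star b') = 0.
  move=> b'B; rewrite /r mulrBl mulr_suml linearB linear_sum /=.
  under eq_big_seq => b bB do rewrite -scalerAl linearZ /= (tau_dual bB b'B).
  rewrite (bigD1_seq b') ?uniq_basis //= eqxx mulr1 big1 ?addr0 ?subrr //.
  by move=> b /negbTE ->; rewrite mulr0.
have yB : y \in <<in_tuple B>>%VS by rewrite spanB memvf.
rewrite (coord_span yB) mulr_sumr linear_sum big1 // => i _.
rewrite -scalerAr linearZ /= -[B`_i]starK r_orth ?mulr0 //.
by rewrite star_basis ?mem_nth.
Qed.

Lemma dual_basis_expansion_star h : h = \sum_(b <- B) tau (b * h) *: star b.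
Proof.
rewrite {1}(dual_basis_expansion h) -big_basis_star.
by apply: eq_bigr => b _; rewrite starK tauC.
Qed.

Lemma chi_rho l x : chi rho0 l x = \tr (rho l x).
Proof.
case: (rho_type l) => _ [P [Pu ->]].
by rewrite mxtrace_mulC mulmxA mulmxV // mul1mx.
Qed.

Lemma tau_rho x : tau x = \sum_l (c l)^-1 * \tr (rho l x).
Proof. by rewrite tau_chi; apply: eq_bigr => l _; rewrite chi_rho. Qed.

Lemma rho_surj (M : forall l, 'M[K]_(d l)) : exists x, forall l, rho l x = M l.
Proof.
have [P hP] := fin_all_exists (fun l => proj2 (rho_type l)).
case: SS => _ _ _ /(_ (fun l => P l *m M l *m invmx (P l))) [x hx].
exists x => l; case: (hP l) => Pu ->.
by rewrite hx !mulmxA mulVmx // mul1mx -mulmxA mulVmx // mulmx1.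
Qed.

(* Evaluate tau against an element acting as a matrix unit in one block. *)
Lemma schur_orthogonality l l' (i j : 'I_(d l)) (k m : 'I_(d l')) :
  \sum_(b <- B) rho l b i j * rho l' (star b) k m
  = ((l == l') && (i == m :> nat) && (j == k :> nat))%:R * c l'.
Proof.
pose E n := \matrix_(p < d n, q < d n)
  ((n == l') && (p == m :> nat) && (q == k :> nat))%:R : 'M[K]_(d n).
have [e rho_e] := rho_surj E.
have tau_e y : tau (e * y) = (c l')^-1 * rho l' y k m.
  rewrite tau_rho (bigD1 l') //= big1 ?addr0 => [|n /negbTE nl'].
    congr (_ * _); rewrite rhoM rho_e mxtrace_mulC /mxtrace (bigD1 k) //=.
    rewrite big1 ?addr0 => [|q /negbTE qk]; last first.
      rewrite mxE big1 // => p _.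
      by rewrite !mxE (qk : (q == k :> nat) = _) andbF mulr0.
    rewrite mxE (bigD1 m) //= big1 ?addr0 => [|p /negbTE pm]; last first.
      by rewrite !mxE (pm : (p == m :> nat) = _) andbF mulr0.
    by rewrite !mxE !eqxx mulr1.
  rewrite rhoM rho_e (_ : E n = 0) ?mul0mx ?mxtrace0 ?mulr0 //.
  by apply/matrixP => p q; rewrite !mxE nl'.
have := congr1 (fun x => rho l x i j) (dual_basis_expansion e).
rewrite /= rho_e /E mxE linear_sum summxE => ->.
rewrite mulr_suml; apply: eq_bigr => b _.
by rewrite linearZ mxE tau_e mulrAC [_ * c l']mulrC mulVKf // mulrC.
Qed.

Definition casimir l := \sum_(b <- B) (rho l (star b))^T *m rho l (star b).

Lemma casimir_intertwines l h :
  (rho l (star h))^T *m casimir l = casimir l *m rho l h.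
Proof.
rewrite mulmx_sumr mulmx_suml.
transitivity (\sum_(b <- B) \sum_(b' <- B)
    tau (h * b * star b') *: ((rho l (star b'))^T *m rho l (star b))).
  apply: eq_bigr => b _.
  rewrite mulmxA -trmx_mul -rhoM -starM {1}(dual_basis_expansion (h * b)).
  rewrite !linear_sum /= mulmx_suml; apply: eq_bigr => b' _.
  by rewrite !linearZ /= scalemxAl.
rewrite exchange_big /=; apply: eq_bigr => b _.
rewrite -mulmxA -rhoM {1}(dual_basis_expansion_star (star b * h)).
rewrite linear_sum mulmx_sumr; apply: eq_bigr => b' _.
rewrite linearZ /= -scalemxAr; congr (_ *: _).
by rewrite [LHS]tauC [RHS]tauC mulrA.
Qed.

Section Valuation.
Variables (G : porderZmodType) (nu : K -> option G).
Hypotheses (OG : ordered_group G) (NU : is_valuation nu).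

Lemma vle_trans (x y z : option G) : vle x y -> vle y z -> vle x z.
Proof.
by case: z => // z; case: y => // y; case: x => //= x; apply: le_trans.
Qed.

Lemma ordered_addr_ge0 (x y : G) : 0 <= x -> 0 <= y -> 0 <= x + y.
Proof.
case: OG => _ mono x_ge0 y_ge0.
by apply: le_trans y_ge0 _; rewrite -[y in y <= _]add0r mono.
Qed.

Lemma nu1 : nu 1 = Some 0.
Proof.
case: NU => nu_eqoo nuM _ _; have := nuM 1 1; rewrite mulr1.
case nu_1: (nu 1) => [g|] /=; last first.
  by move: nu_1 => /nu_eqoo /eqP; rewrite oner_eq0.
by move=> [g_eq]; congr Some; apply: (@addrI _ g); rewrite addr0 -g_eq.
Qed.

Lemma nu_neq0 u g : nu u = Some g -> u != 0.
Proof.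
by case: NU => nu_eqoo _ _ _ nu_u; apply/eqP => /nu_eqoo; rewrite nu_u.
Qed.

Lemma nuV_unit u : nu u = Some 0 -> nu u^-1 = Some 0.
Proof.
case: NU => _ nuM _ _ nu_u.
have := nuM u u^-1; rewrite mulfV ?(nu_neq0 nu_u) // nu1 nu_u.
by case: (nu u^-1) => [g|] //= [->]; rewrite add0r.
Qed.

Fact inO_semiring_closed : semiring_closed (inO nu).
Proof.
case: NU => nu_eqoo nuM nuD _.
split; split; rewrite /in_mem /= /inO.
- by have [_ ->] := nu_eqoo 0.
- move=> x y x_ge0 y_ge0; apply: vle_trans (nuD x y).
  by rewrite /vmin; case: ifP.
- by rewrite nu1 /=.
- move=> x y; rewrite !unfold_in /= nuM.
  by case: (nu x) => // gx; case: (nu y) => // gy; apply: ordered_addr_ge0.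
Qed.
HB.instance Definition _ :=
  GRing.isSemiringClosed.Build K (inO nu) inO_semiring_closed.

Lemma inO_unit u : nu u = Some 0 -> inO nu u.
Proof. by rewrite /inO => -> /=. Qed.

Lemma inOM_bounded (g : G) (y z : K) :
  nu y = Some g -> vle (Some (- g)) (nu z) -> inO nu (y * z).
Proof.
case: NU OG => _ nuM _ _ [_ mono] nu_y; rewrite /inO nuM nu_y.
by case: (nu z) => //= h /(mono _ _ g); rewrite addNr addrC.
Qed.

Section Residue.
Variables (F : fieldType) (red : K -> F).
Hypothesis RED : is_residue_map nu red.

Lemma red1 : red 1 = 1.
Proof. by case: RED. Qed.

Lemma redD : {in inO nu &, {morph red : x y / x + y}}.
Proof. by case: RED. Qed.

Lemma redM : {in inO nu &, {morph red : x y / x * y}}.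
Proof. by case: RED. Qed.

Lemma red0 : red 0 = 0.
Proof.
have O0 : inO nu 0 := rpred0 _.
by apply: (@addrI _ (red 0)); rewrite -redD // !addr0.
Qed.

Lemma red_sum (I : Type) (r : seq I) (P : pred I) (f : I -> K) :
  (forall i, P i -> inO nu (f i)) ->
  red (\sum_(i <- r | P i) f i) = \sum_(i <- r | P i) red (f i).
Proof.
move=> fO; elim: r => [|i r IH]; first by rewrite !big_nil red0.
rewrite !big_cons; case: ifP => // Pi.
by rewrite redD ?IH //; [exact: fO | apply: rpred_sum].
Qed.

Lemma red_nat n : red n%:R = n%:R.
Proof.
elim: n => [|n IH]; first exact: red0.
by rewrite !mulrS redD ?red1 ?IH //; [exact: rpred1 | exact: rpred_nat].
Qed.

Lemma red_unit_neq0 u : nu u = Some 0 -> red u != 0.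
Proof.
case: RED => _ _ _ red_eq0 _ nu_u.
by rewrite red_eq0 ?inO_unit // /inm nu_u ltxx.
Qed.

Lemma redV_unit u : nu u = Some 0 -> red u^-1 = (red u)^-1.
Proof.
move=> nu_u; have uO := inO_unit nu_u; have uVO := inO_unit (nuV_unit nu_u).
apply: (mulfI (red_unit_neq0 nu_u)).
by rewrite -redM // !mulfV ?red1 ?red_unit_neq0 // (nu_neq0 nu_u).
Qed.

Lemma map_red_mulmx m n p (A : 'M[K]_(m, n)) (C : 'M[K]_(n, p)) :
  A \is a mxOver (inO nu) -> C \is a mxOver (inO nu) ->
  map_mx red (A *m C) = map_mx red A *m map_mx red C.
Proof.
move=> /mxOverP AO /mxOverP CO; apply/matrixP => i j; rewrite !mxE.
rewrite red_sum => [|k _]; last exact: rpredM.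
by apply: eq_bigr => k _; rewrite redM // !mxE.
Qed.

Lemma map_red_sum m n (I : eqType) (r : seq I) (M : I -> 'M[K]_(m, n)) :
  {in r, forall i, M i \is a mxOver (inO nu)} ->
  map_mx red (\sum_(i <- r) M i) = \sum_(i <- r) map_mx red (M i).
Proof.
move=> MO; apply/matrixP => p q; rewrite !mxE !summxE big_seq.
rewrite red_sum => [|i ir]; last exact: (mxOverP (MO i ir)).
by rewrite -big_seq; apply: eq_bigr => i _; rewrite mxE.
Qed.

Lemma red_trace n (A : 'M[K]_n) :
  A \is a mxOver (inO nu) -> red (\tr A) = \tr (map_mx red A).
Proof.
move=> /mxOverP AO; rewrite red_sum => [|i _]; last exact: AO.
by apply: eq_bigr => i _; rewrite mxE.
Qed.

Section Reduction.
Variables (a : L -> G) (v : G -> K).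
Hypotheses (FR : formally_real F)
  (nu_c : forall l, nu (c l) = Some (- (a l *+ 2)))
  (PS : partial_section nu a v)
  (rho_bal : forall l, balanced nu tau star (a l) (rho l)).

Local Notation cm := (cmat red a v rho).
Local Notation fbar l := (red (fl c a v l)).
Local Notation gamma := (gammaF red c a v rho).
Local Notation n_ := (nF red star c a v rho).

Definition srho l x := v (a l) *: rho l x.

Lemma in_Gamma0_muln n l : in_Gamma0 a (a l *+ n).
Proof.
exists (fun l' => if l' == l then n%:Z else 0).
by rewrite (bigD1 l) //= eqxx big1 ?addr0 // => l' /negbTE ->.
Qed.

Lemma nu_v n l : nu (v (a l *+ n)) = Some (a l *+ n).
Proof. by case: PS => _ /(_ _ (in_Gamma0_muln n l)) []. Qed.

Lemma vD n m l : v (a l *+ (n + m)) = v (a l *+ n) * v (a l *+ m).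
Proof. by case: PS => vM _; rewrite mulrnDr vM //; apply: in_Gamma0_muln. Qed.

Lemma nu_fl l : nu (fl c a v l) = Some 0.
Proof. by case: NU => _ nuM _ _; rewrite /fl nuM nu_v nu_c /= subrr. Qed.

Lemma fbar_neq0 l : fbar l != 0.
Proof. exact/red_unit_neq0/nu_fl. Qed.

Lemma inO_flV l : inO nu (fl c a v l)^-1.
Proof. exact/inO_unit/nuV_unit/nu_fl. Qed.

Lemma srho_over l x : x \in B -> srho l x \is a mxOver (inO nu).
Proof.
move=> xB; apply/mxOverP => i j; rewrite mxE.
exact: (inOM_bounded (nu_v 1 l) (rho_bal SB xB i j)).
Qed.

Lemma srhoM l x y : srho l x *m srho l y = v (a l *+ 2) *: rho l (x * y).
Proof. by rewrite -scalemxAl -scalemxAr scalerA -(vD 1 1) rhoM. Qed.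

Lemma inO_weighted_trace (M : forall l, 'M[K]_(d l)) :
  (forall l, M l \is a mxOver (inO nu)) ->
  inO nu (\sum_l (fl c a v l)^-1 * \tr (M l)).
Proof.
move=> MO; apply: rpred_sum => l _.
exact: rpredM (inO_flV l) (mxtrace_mxOver (MO l)).
Qed.

Lemma red_weighted_trace (M : forall l, 'M[K]_(d l)) :
  (forall l, M l \is a mxOver (inO nu)) ->
  red (\sum_l (fl c a v l)^-1 * \tr (M l))
  = \sum_l (fbar l)^-1 * \tr (map_mx red (M l)).
Proof.
move=> MO; rewrite red_sum => [|l _]; last first.
  exact: rpredM (inO_flV l) (mxtrace_mxOver (MO l)).
apply: eq_bigr => l _; rewrite redM; last exact: mxtrace_mxOver.
  by rewrite redV_unit ?nu_fl // red_trace.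
exact: inO_flV.
Qed.

Lemma gammaF_trace x y z :
  gamma x y z = \sum_l (fbar l)^-1 * \tr (cm l x *m cm l y *m cm l z).
Proof.
apply: eq_bigr => l _; rewrite mulr_sumr; apply: eq_bigr => s _.
rewrite mxE mulr_sumr exchange_big /=; apply: eq_bigr => u _.
rewrite [(_ *m _) s u]mxE mulr_suml mulr_sumr; apply: eq_bigr => t _.
by rewrite !mulrA.
Qed.

Lemma nF_trace x : n_ x = \sum_l (fbar l)^-1 * \tr (cm l (star x)).
Proof. by apply: eq_bigr => l _; rewrite mulr_sumr. Qed.

Lemma S3_trace x y z :
  S3 rho0 c a v x y z
  = \sum_l (fl c a v l)^-1 * \tr (srho l x *m srho l y *m srho l z).
Proof.
apply: eq_bigr => l _; rewrite -mulrA chi_rho; congr (_ * _).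
by rewrite srhoM -scalemxAl -scalemxAr scalerA -rhoM -(vD 2 1) mxtraceZ.
Qed.

Lemma S1_trace x :
  S1 star rho0 c a v x = \sum_l (fl c a v l)^-1 * \tr (srho l (star x)).
Proof. by apply: eq_bigr => l _; rewrite -mulrA chi_rho mxtraceZ. Qed.

Lemma srho3_over l x y z : x \in B -> y \in B -> z \in B ->
  srho l x *m srho l y *m srho l z \is a mxOver (inO nu).
Proof. by move=> xB yB zB; rewrite !mxOverM ?srho_over. Qed.

Lemma S3_reduction x y z : x \in B -> y \in B -> z \in B ->
  inO nu (S3 rho0 c a v x y z) /\ gamma x y z = red (S3 rho0 c a v x y z).
Proof.
move=> xB yB zB; rewrite S3_trace gammaF_trace.
split; first exact: inO_weighted_trace (fun l => srho3_over l xB yB zB).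
rewrite red_weighted_trace => [|l]; last exact: srho3_over.
by apply: eq_bigr => l _; rewrite !map_red_mulmx ?mxOverM ?srho_over.
Qed.

Lemma S1_reduction x : x \in B ->
  inO nu (S1 star rho0 c a v x) /\ n_ x = red (S1 star rho0 c a v x).
Proof.
move=> /star_basis xB; rewrite S1_trace nF_trace.
split; first exact: inO_weighted_trace (fun l => srho_over l xB).
by rewrite red_weighted_trace // => l; apply: srho_over.
Qed.

Lemma gammaF_cycle x y z : gamma x y z = gamma y z x.
Proof.
rewrite !gammaF_trace; apply: eq_bigr => l _.
by rewrite -mulmxA mxtrace_mulC.
Qed.

Lemma schur_orthogonality_mod l l' (i j : 'I_(d l)) (k m : 'I_(d l')) :
  \sum_(b <- B) cm l b i j * cm l' (star b) k m
  = ((l == l') && (i == m :> nat) && (j == k :> nat))%:R * fbar l'.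
Proof.
set delta := (l == l') && _ && _.
have entry_over l1 x p q : x \in B -> srho l1 x p q \in inO nu.
  by move=> xB; apply: (mxOverP (srho_over l1 xB)).
have lifted : \sum_(b <- B) srho l b i j * srho l' (star b) k m
              = delta%:R * fl c a v l'.
  rewrite (eq_bigr (fun b =>
      v (a l) * v (a l') * (rho l b i j * rho l' (star b) k m))); last first.
    by move=> b _; rewrite !mxE mulrACA.
  rewrite -mulr_sumr schur_orthogonality // /delta.
  case: eqP => [e|_] /=; last by rewrite !mul0r mulr0.
  by subst l'; rewrite mulrCA /fl (vD 1 1).
rewrite big_seq (eq_bigr (fun b => red (srho l b i j * srho l' (star b) k m))).
  rewrite -red_sum => [|b bB]; last first.
    have sbB := star_basis bB.
    by apply: rpredM; [exact: entry_over bB | exact: entry_over sbB].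
  rewrite -big_seq lifted redM ?red_nat //; first exact: rpred_nat.
  exact: inO_unit (nu_fl l').
move=> b bB; rewrite redM; first by rewrite !mxE.
  exact: entry_over bB.
exact: entry_over (star_basis bB).
Qed.

Lemma dual_basis_mod x y : x \in B -> y \in B ->
  \sum_l (fbar l)^-1 * \tr (cm l (star x) *m cm l y) = (x == y)%:R.
Proof.
move=> xB yB; have xsB := star_basis xB.
have prod_over l : srho l (star x) *m srho l y \is a mxOver (inO nu).
  by rewrite mxOverM ?srho_over.
rewrite (eq_bigr (fun l =>
    (fbar l)^-1 * \tr (map_mx red (srho l (star x) *m srho l y)))).
  rewrite -red_weighted_trace // eq_sym -red_nat -tau_dual // tauC tau_rho.
  congr red; apply: eq_bigr => l _.
  rewrite srhoM mxtraceZ mulrA /fl invfM [_ / c l * _]mulrAC mulVf ?mul1r //.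
  exact: nu_neq0 (nu_v 2 l).
by move=> l _; rewrite map_red_mulmx ?srho_over.
Qed.

Lemma sum_nF_cmat l : \sum_(z <- B) n_ z *: cm l z = 1%:M.
Proof.
apply/matrixP => u s; rewrite summxE mxE.
under eq_bigr => z _ do rewrite mxE /nF mulr_suml.
rewrite exchange_big /=.
transitivity (\sum_l' \sum_(k < d l')
    ((l == l') && (u == k :> nat) && (s == k :> nat))%:R : F).
  apply: eq_bigr => l' _; under eq_bigr => z _ do rewrite mulr_suml.
  rewrite exchange_big /=; apply: eq_bigr => k _.
  rewrite (eq_bigr (fun z => (fbar l')^-1 * (cm l z u s * cm l' (star z) k k))).
    rewrite -mulr_sumr schur_orthogonality_mod mulrCA.
    by rewrite mulVf ?mulr1 ?fbar_neq0.
  by move=> z _; rewrite -mulrA [_ * cm l z u s]mulrC.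
rewrite (bigD1 l) //= [X in _ + X]big1 ?addr0; last first.
  by move=> l' /negbTE l'l; apply: big1 => k _; rewrite eq_sym l'l.
rewrite eqxx (bigD1 u) //= [X in _ + X]big1 ?addr0; last first.
  by move=> k /negbTE ku; rewrite eq_sym (ku : (k == u :> nat) = _).
by rewrite eqxx eq_sym.
Qed.

Lemma sum_gammaF_nF x y : x \in B -> y \in B ->
  \sum_(z <- B) gamma (star x) y z * n_ z = (x == y)%:R.
Proof.
move=> xB yB; rewrite -dual_basis_mod //.
under eq_bigr => z _ do rewrite gammaF_trace mulr_suml.
rewrite exchange_big /=; apply: eq_bigr => l _.
rewrite -[X in _ = _ * \tr X]mulmx1 -(sum_nF_cmat l).
rewrite mulmx_sumr linear_sum mulr_sumr.
apply: eq_bigr => z _; rewrite -scalemxAr linearZ /=.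
by rewrite [RHS]mulrA [RHS]mulrAC.
Qed.

Lemma srhoT_srho_over l x : x \in B ->
  (srho l x)^T *m srho l x \is a mxOver (inO nu).
Proof. by move=> xB; rewrite mxOverM ?mxOver_trmx ?srho_over. Qed.

Lemma scaled_casimir l :
  v (a l *+ 2) *: casimir l
  = \sum_(b <- B) (srho l (star b))^T *m srho l (star b).
Proof.
rewrite scaler_sumr; apply: eq_bigr => b _.
by rewrite /srho !linearZ /= -scalemxAl scalerA -(vD 1 1).
Qed.

Lemma scaled_casimir_over l : v (a l *+ 2) *: casimir l \is a mxOver (inO nu).
Proof.
rewrite scaled_casimir big_seq; apply: rpred_sum => b bB.
by rewrite srhoT_srho_over ?star_basis.
Qed.

Definition casimir_mod l := \sum_(b <- B) (cm l (star b))^T *m cm l (star b).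

Lemma casimir_modE l : casimir_mod l = map_mx red (v (a l *+ 2) *: casimir l).
Proof.
rewrite scaled_casimir map_red_sum => [|b bB]; last first.
  by rewrite srhoT_srho_over ?star_basis.
apply: eq_big_seq => b bB; have sbB := star_basis bB.
by rewrite map_red_mulmx ?map_trmx ?mxOver_trmx ?srho_over.
Qed.

Lemma casimir_mod_intertwines l x : x \in B ->
  (cm l (star x))^T *m casimir_mod l = casimir_mod l *m cm l x.
Proof.
move=> xB; have xsB := star_basis xB.
have lifted : (srho l (star x))^T *m (v (a l *+ 2) *: casimir l)
              = (v (a l *+ 2) *: casimir l) *m srho l x.
  by rewrite /srho !linearZ /= -!scalemxAl casimir_intertwines !scalerA mulrC.
rewrite casimir_modE /cmat map_trmx -!map_red_mulmx ?lifted //.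
all: by rewrite ?mxOver_trmx ?srho_over ?scaled_casimir_over.
Qed.

(* [w C w^T] is a sum of squares, so [c^l(b^* ) w^T] vanishes for every [b];
   Schur orthogonality then recovers [w] from these products. *)
Lemma casimir_mod_ker l (w : 'rV[F]_(d l)) : w *m casimir_mod l = 0 -> w = 0.
Proof.
move=> w_ker.
pose pairs := [seq (b, i) | b <- B, i <- index_enum 'I_(d l)].
have sqr_sum0 :
    \sum_(p <- pairs) ((cm l (star p.1) *m w^T) p.2 0) ^+ 2 = 0.
  have : (w *m casimir_mod l *m w^T) 0 0 = 0 by rewrite w_ker mul0mx mxE.
  rewrite big_allpairs /= /casimir_mod mulmx_sumr mulmx_suml summxE => sum0.
  apply: etrans _ sum0; apply: eq_bigr => b _.
  rewrite mulmxA -mulmxA -[w *m _]trmxK trmx_mul trmxK mxE.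
  by apply: eq_bigr => i _; rewrite [_^T 0 i]mxE expr2.
have vanish b : b \in B -> cm l (star b) *m w^T = 0.
  move=> bB; apply/matrixP => i j; rewrite ord1 [RHS]mxE.
  have bi_pair : (b, i) \in pairs by rewrite allpairs_f ?mem_index_enum.
  exact: formally_real_sqr_sum_eq0 FR sqr_sum0 _ bi_pair.
apply/rowP => k; rewrite [RHS]mxE; apply/eqP.
have : \sum_j w 0 j * \sum_(b <- B) cm l b k k * cm l (star b) k j = 0.
  under eq_bigr do rewrite mulr_sumr.
  rewrite exchange_big /= big_seq big1 // => b bB.
  transitivity (cm l b k k * (cm l (star b) *m w^T) k 0); last first.
    by rewrite vanish // [X in _ * X]mxE mulr0.
  rewrite [(_ *m _) k 0]mxE mulr_sumr; apply: eq_bigr => j _.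
  by rewrite [w^T j 0]mxE mulrCA [w 0 j * _]mulrC.
under eq_bigr do rewrite schur_orthogonality_mod !eqxx andbT /=.
rewrite (bigD1 k) //= big1 ?addr0 => [|j /negbTE jk]; last first.
  by rewrite eq_sym (jk : (j == k :> nat) = _) mul0r mulr0.
by rewrite eqxx mul1r => /eqP; rewrite mulf_eq0 (negbTE (fbar_neq0 l)) orbF.
Qed.

Lemma casimir_mod_unit l : casimir_mod l \in unitmx.
Proof.
rewrite -row_free_unit -kermx_eq0; apply/eqP/row_matrixP => i.
by rewrite row0; apply: casimir_mod_ker; rewrite -row_mul mulmx_ker row0.
Qed.

Lemma cmat_star l x : x \in B ->
  cm l (star x) = (casimir_mod l *m cm l x *m invmx (casimir_mod l))^T.
Proof.
move=> xB; apply: trmx_inj.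
by rewrite trmxK -casimir_mod_intertwines // mulmxK ?casimir_mod_unit.
Qed.

Lemma nF_star x : x \in B -> n_ x = n_ (star x).
Proof.
move=> xB; rewrite !nF_trace starK; apply: eq_bigr => l _.
by rewrite cmat_star // mxtrace_tr mxtrace_conj ?casimir_mod_unit.
Qed.

Lemma gammaF_star x y z : x \in B -> y \in B -> z \in B ->
  gamma x y z = gamma (star y) (star x) (star z).
Proof.
move=> xB yB zB; rewrite !gammaF_trace; apply: eq_bigr => l _; congr (_ * _).
rewrite !cmat_star // -!trmx_mul mxtrace_tr !conjmxM ?casimir_mod_unit //.
by rewrite mxtrace_conj ?casimir_mod_unit // mxtrace_mulC.
Qed.

End Reduction.
End Residue.
End Valuation.
End SymmetricAlgebra.

Theorem mainTheorem7 (G : porderZmodType) (K F : fieldType)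
  (nu : K -> option G) (red : K -> F)
  (H : falgType K) (tau : H -> K) (star : H -> H) (B : seq H)
  (L : finType) (d : L -> nat) (rho0 : forall l, H -> 'M[K]_(d l))
  (c : L -> K) (a : L -> G) (v : G -> K)
  (rho : forall l, H -> 'M[K]_(d l)) :
  ordered_group G ->
  is_valuation nu ->
  is_residue_map nu red ->
  formally_real F ->
  is_trace_form tau ->
  is_invol_antiaut star ->
  star_sym_basis tau star B ->
  split_semisimple rho0 ->
  (forall l, c l != 0) ->
  (forall x, tau x = \sum_l (c l)^-1 * chi rho0 l x) ->
  (forall l, nu (c l) = Some (- (a l *+ 2))) ->
  partial_section nu a v ->
  (forall l, of_type (rho l) (rho0 l)) ->
  (forall l, balanced nu tau star (a l) (rho l)) ->
  [/\ (* (a) *)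
      (forall x y z, x \in B -> y \in B -> z \in B ->
         [/\ inO nu (S3 rho0 c a v x y z),
             inO nu (S1 star rho0 c a v x),
             gammaF red c a v rho x y z = red (S3 rho0 c a v x y z) &
             nF red star c a v rho x = red (S1 star rho0 c a v x)]),
      (* (b) *)
      (forall x y z, x \in B -> y \in B -> z \in B ->
         gammaF red c a v rho x y z = gammaF red c a v rho y z x),
      (* (c) *)
      (forall x y, x \in B -> y \in B ->
         \sum_(z <- B) gammaF red c a v rho (star x) y z
                        * nF red star c a v rho z = (x == y)%:R),
      (* (d) *)
      (forall x y z, x \in B -> y \in B -> z \in B ->
         gammaF red c a v rho x y z
         = gammaF red c a v rho (star y) (star x) (star z)) &
      (* (e) *)
      (forall x, x \in B -> nF red star c a v rho x = nF red star c a v rho (star x))].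
Proof.
move=> OG NU RED FR TF ST SB SS c_neq0 tau_chi nu_c PS rho_type rho_bal.
split=> [x y z xB yB zB | x y z _ _ _ | x y xB yB | x y z xB yB zB | x xB].
- have [S3O gammaE] :=
    S3_reduction SB rho_type OG NU RED nu_c PS rho_bal xB yB zB.
  have [S1O nE] := S1_reduction SB rho_type OG NU RED nu_c PS rho_bal xB.
  by split.
- exact: gammaF_cycle.
- exact (sum_gammaF_nF TF ST SB SS c_neq0 tau_chi rho_type OG NU RED nu_c PS
    rho_bal xB yB).
- exact (gammaF_star TF ST SB SS c_neq0 tau_chi rho_type OG NU RED FR nu_c PS
    rho_bal xB yB zB).
- exact (nF_star TF ST SB SS c_neq0 tau_chi rho_type OG NU RED FR nu_c PS
    rho_bal xB).
Qed.
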